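(* Let $S$ be a semilattice and $\omega$ a submultiplicative weight on $S$. The following are equivalent: (i) $\ell^1_\omega(S)$ is AMNM; (ii) for every $\varepsilon>0$ there exists $\delta>0$ such that whenever $\phi:S\to\{0,1\}$ satisfies $\sup_{e,f\in S}\frac{|\phi(ef)-\phi(e)\phi(f)|}{\omega(e)\omega(f)}\le\delta$, there exists a subset $F\subseteq S$ which is either empty or a filter such that $\sup_{e\in S}\frac{|\chi_F(e)-\phi(e)|}{\omega(e)}\le\varepsilon$, where $\chi_F$ is the indicator function of $F$.
   Context: A semilattice is a commutative semigroup in which every element is idempotent, ordered by $x\preceq y$ iff $xy=x$. A weight is a function $\omega:S\to(0,\infty)$, submultiplicative if $\omega(xy)\le\omega(x)\omega(y)$. $\ell^1_\omega(S)$ is the Banach space of $a:S\to\mathbb C$ with $\|a\|=\sum_s|a(s)|\omega(s)<\infty$, a Banach algebra under convolution ($\delta_x*\delta_y=\delta_{xy}$). A filter in $S$ is a non-empty subset $F$ closed under multiplication and upward closed (if $y\in F$ and $x\succeq y$ then $x\in F$). For a bounded linear map $T$ between Banach algebras, $\operatorname{def}(T)=\sup\{\|T(xy)-T(x)T(y)\|:\|x\|,\|y\|\le1\}$; $\operatorname{Mult}(A,\mathbb C)$ is the set of bounded multiplicative linear functionals on $A$ (including $0$). $A$ is AMNM if for every $\varepsilon>0$ there is $\delta>0$ such that every $\psi\in A^*$ with $\operatorname{def}(\psi)\le\delta$ satisfies $\operatorname{dist}_{A^*}(\psi,\operatorname{Mult}(A,\mathbb C))\le\varepsilon$. *)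

From Stdlib Require Import Reals Lra List.
Import ListNotations.
Open Scope R_scope.

Definition Cx : Type := (R * R)%type.
Definition C0 : Cx := (0, 0).
Definition Cadd (z w : Cx) : Cx := (fst z + fst w, snd z + snd w).
Definition Csub (z w : Cx) : Cx := (fst z - fst w, snd z - snd w).
Definition Cmul (z w : Cx) : Cx :=
  (fst z * fst w - snd z * snd w, fst z * snd w + snd z * fst w).
Definition Cmod (z : Cx) : R := sqrt (fst z ^ 2 + snd z ^ 2).

Definition is_semilattice {S : Type} (op : S -> S -> S) : Prop :=
  (forall x y z, op x (op y z) = op (op x y) z) /\
  (forall x y, op x y = op y x) /\
  (forall x, op x x = x).

Definition sl_le {S : Type} (op : S -> S -> S) (x y : S) : Prop := op x y = x.

Definition is_weight {S : Type} (w : S -> R) : Prop := forall s, 0 < w s.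

Definition submultiplicative {S : Type} (op : S -> S -> S) (w : S -> R) : Prop :=
  forall x y, w (op x y) <= w x * w y.

Definition is_filter {S : Type} (op : S -> S -> S) (F : S -> Prop) : Prop :=
  (exists x, F x) /\
  (forall x y, F x -> F y -> F (op x y)) /\
  (forall x y, F y -> sl_le op y x -> F x).

Definition Rsum_list {I : Type} (f : I -> R) (l : list I) : R :=
  fold_right (fun i acc => f i + acc) 0 l.
Definition Csum_list {I : Type} (f : I -> Cx) (l : list I) : Cx :=
  fold_right (fun i acc => Cadd (f i) acc) C0 l.

Definition has_sum_C {I : Type} (f : I -> Cx) (L : Cx) : Prop :=
  forall eps, 0 < eps -> exists l0 : list I,
    forall l : list I, NoDup l -> incl l0 l -> Cmod (Csub (Csum_list f l) L) < eps.

Definition l1_norm_le {S : Type} (w : S -> R) (a : S -> Cx) (r : R) : Prop :=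
  forall l : list S, NoDup l -> Rsum_list (fun s => Cmod (a s) * w s) l <= r.

Definition in_l1 {S : Type} (w : S -> R) (a : S -> Cx) : Prop :=
  exists r, l1_norm_le w a r.

Definition fadd {S : Type} (a b : S -> Cx) : S -> Cx := fun s => Cadd (a s) (b s).
Definition fscale {S : Type} (c : Cx) (a : S -> Cx) : S -> Cx := fun s => Cmul c (a s).

(** convolution: z = x * y, i.e. z(u) = sum_{st = u} x(s) y(t)
    (so that delta_s * delta_t = delta_{st}). *)
Definition conv {S : Type} (op : S -> S -> S) (x y z : S -> Cx) : Prop :=
  forall u, has_sum_C
    (fun p : { st : S * S | op (fst st) (snd st) = u } =>
       Cmul (x (fst (proj1_sig p))) (y (snd (proj1_sig p)))) (z u).

(** functionals are represented as maps (S -> Cx) -> Cx; only their values on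
    l^1_w(S) matter. *)
Definition is_linear_functional {S : Type} (w : S -> R) (psi : (S -> Cx) -> Cx) : Prop :=
  (forall a b, in_l1 w a -> in_l1 w b -> psi (fadd a b) = Cadd (psi a) (psi b)) /\
  (forall c a, in_l1 w a -> psi (fscale c a) = Cmul c (psi a)).

Definition dual_dist_le {S : Type} (w : S -> R) (psi phi : (S -> Cx) -> Cx) (r : R) : Prop :=
  forall a N, in_l1 w a -> l1_norm_le w a N -> Cmod (Csub (psi a) (phi a)) <= r * N.

Definition in_dual {S : Type} (w : S -> R) (psi : (S -> Cx) -> Cx) : Prop :=
  is_linear_functional w psi /\
  exists M, forall a N, in_l1 w a -> l1_norm_le w a N -> Cmod (psi a) <= M * N.

(** Mult(A, C), including 0 *)
Definition is_mult {S : Type} (op : S -> S -> S) (w : S -> R) (phi : (S -> Cx) -> Cx) : Prop :=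
  in_dual w phi /\
  forall x y z, in_l1 w x -> in_l1 w y -> conv op x y z ->
    phi z = Cmul (phi x) (phi y).

Definition defect_le {S : Type} (op : S -> S -> S) (w : S -> R)
  (psi : (S -> Cx) -> Cx) (delta : R) : Prop :=
  forall x y z, in_l1 w x -> in_l1 w y -> l1_norm_le w x 1 -> l1_norm_le w y 1 ->
    conv op x y z -> Cmod (Csub (psi z) (Cmul (psi x) (psi y))) <= delta.

(** dist_{A^*}(psi, Mult(A, C)) <= eps  (an infimum, hence the slack eta) *)
Definition dist_mult_le {S : Type} (op : S -> S -> S) (w : S -> R)
  (psi : (S -> Cx) -> Cx) (eps : R) : Prop :=
  forall eta, 0 < eta -> exists phi, is_mult op w phi /\ dual_dist_le w psi phi (eps + eta).

Definition AMNM_l1 {S : Type} (op : S -> S -> S) (w : S -> R) : Prop :=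
  forall eps, 0 < eps -> exists delta, 0 < delta /\
    forall psi, in_dual w psi -> defect_le op w psi delta -> dist_mult_le op w psi eps.

Definition b2R (b : bool) : R := if b then 1 else 0.

Definition cond_ii {S : Type} (op : S -> S -> S) (w : S -> R) : Prop :=
  forall eps, 0 < eps -> exists delta, 0 < delta /\
    forall phi : S -> bool,
      (forall e f, Rabs (b2R (phi (op e f)) - b2R (phi e) * b2R (phi f)) / (w e * w f) <= delta) ->
      exists F : S -> Prop,
        ((forall x, ~ F x) \/ is_filter op F) /\
        (forall e, (F e -> Rabs (1 - b2R (phi e)) / w e <= eps) /\
                   (~ F e -> Rabs (0 - b2R (phi e)) / w e <= eps)).

From Pilot Require Import Defs.
From Stdlib Require Import Reals Lra List Permutation Classical ClassicalDescription
  IndefiniteDescription FunctionalExtensionality ProofIrrelevance.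
From Coquelicot Require Complex.
Import ListNotations.
Open Scope R_scope.

(** Let [S] be a semilattice with a submultiplicative weight [w]; then
    [w >= 1] because [w(s) = w(s s) <= w(s)^2].  For [th : S -> bool] let
    [Theta_th(a) = sum_{th s} a(s)], a functional of norm at most [1] with
    [Theta_th(delta_s) = th(s)].  The proof rests on three facts:
    - density: a bounded functional whose values on the point masses satisfy
      [|Psi(delta_s)| <= c w(s)] has norm at most [c];
    - the defect of [Theta_th] is at most [d] when
      [|th(st) - th(s)th(t)| <= d w(s) w(t)] (density in each variable);
    - characters correspond to filters: the [Theta] of the indicator of a
      filter (or of the empty set) is a character, and the point values of a
      character are multiplicative idempotents, whose support is a filter.
    (i) => (ii) applies AMNM to [Theta_phi].  (ii) => (i) rounds the point
    values of an almost multiplicative [psi] (which are almost idempotent) to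
    [{0,1}], applies (ii) to the result and compares [psi] with the character
    of the filter obtained, again by density. *)

Ltac cx_ring := unfold Cadd, Csub, Cmul, C0; apply injective_projections; simpl; ring.

(** The complex numbers of [Defs] are pairs of reals with the same operations
    as Coquelicot's [C], so the modulus facts are Coquelicot's. *)
Lemma Cmod_mul z u : Cmod (Cmul z u) = Cmod z * Cmod u.
Proof. exact (Complex.Cmod_mult z u). Qed.
Lemma Cmod_add z u : Cmod (Cadd z u) <= Cmod z + Cmod u.
Proof. exact (Complex.Cmod_triangle z u). Qed.
Lemma Cmod_ge0 z : 0 <= Cmod z.
Proof. exact (Complex.Cmod_ge_0 z). Qed.
Lemma Cmod_real x : Cmod (x, 0) = Rabs x.
Proof. exact (Complex.Cmod_R x). Qed.
Lemma Cmod_C0 : Cmod C0 = 0.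
Proof. unfold C0. rewrite Cmod_real. apply Rabs_R0. Qed.
Lemma Cmod_opp z : Cmod (Csub C0 z) = Cmod z.
Proof. replace (Csub C0 z) with (Complex.Copp z) by cx_ring. exact (Complex.Cmod_opp z). Qed.
Lemma Cmod_sub_sym z u : Cmod (Csub z u) = Cmod (Csub u z).
Proof. replace (Csub z u) with (Csub C0 (Csub u z)) by cx_ring. apply Cmod_opp. Qed.
Lemma Cmod_sub z u : Cmod (Csub z u) <= Cmod z + Cmod u.
Proof.
  replace (Csub z u) with (Cadd z (Csub C0 u)) by cx_ring.
  rewrite <- (Cmod_opp u). apply Cmod_add.
Qed.
Lemma Cmod_tri a b c : Cmod (Csub a c) <= Cmod (Csub a b) + Cmod (Csub b c).
Proof. replace (Csub a c) with (Cadd (Csub a b) (Csub b c)) by cx_ring. apply Cmod_add. Qed.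

Lemma Cx_eq_of_dist_le0 a b : Cmod (Csub a b) <= 0 -> a = b.
Proof.
  intros h. assert (h0 : Csub a b = C0).
  { apply Complex.Cmod_eq_0. apply Rle_antisym; [exact h | apply Cmod_ge0]. }
  unfold Csub, C0 in h0. injection h0; intros h2 h1. apply injective_projections; lra.
Qed.

Lemma div_le_iff X W e : 0 < W -> (X / W <= e <-> X <= e * W).
Proof.
  intros hW. split; intros h.
  - apply (Rmult_le_compat_r W) in h; [|lra]. unfold Rdiv in h.
    rewrite Rmult_assoc, Rinv_l in h; lra.
  - apply (Rmult_le_reg_r W); auto. unfold Rdiv. rewrite Rmult_assoc, Rinv_l; lra.
Qed.

Definition C1 : Cx := (1, 0).
Definition bC (b : bool) : Cx := (b2R b, 0).

Lemma Cmod_bC b : Cmod (bC b) <= 1.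
Proof. unfold bC, b2R. rewrite Cmod_real. destruct b; rewrite ?Rabs_R1, ?Rabs_R0; lra. Qed.

Lemma bC_sub a b : Csub (bC a) (bC b) = (b2R a - b2R b, 0).
Proof. unfold bC. cx_ring. Qed.

Lemma bC_defect a b c : Csub (bC a) (Cmul (bC b) (bC c)) = (b2R a - b2R b * b2R c, 0).
Proof. unfold bC. cx_ring. Qed.

Lemma b2R_defect_cases a b c :
  Rabs (b2R a - b2R b * b2R c) = 0 \/ Rabs (b2R a - b2R b * b2R c) = 1.
Proof.
  destruct a, b, c; unfold b2R; cbv iota; match goal with |- context [Rabs ?X] =>
  first [ (replace X with 0 by ring); left; apply Rabs_R0
        | (replace X with 1 by ring); right; apply Rabs_R1
        | (replace X with (- (1)) by ring); right; rewrite Rabs_Ropp; apply Rabs_R1 ] end.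
Qed.

Lemma idempotent_C z : z = Cmul z z -> z = C0 \/ z = C1.
Proof.
  destruct z as [a b]. unfold Cmul, C0, C1; simpl. intros h. injection h; intros h2 h1.
  assert (hb : b * (1 - 2 * a) = 0) by nra. apply Rmult_integral in hb. destruct hb as [hb|ha].
  - subst b. assert (ha : a * (a - 1) = 0) by nra.
    apply Rmult_integral in ha. destruct ha as [ha|ha].
    + left; f_equal; lra.
    + right; f_equal; lra.
  - exfalso. assert (a = 1/2) by lra. subst a. nra.
Qed.

Lemma near_idempotent z r : 0 <= r -> Cmod (Csub z (Cmul z z)) <= r * r ->
  Cmod z <= r \/ Cmod (Csub C1 z) <= r.
Proof.
  intros hr h.
  replace (Csub z (Cmul z z)) with (Cmul z (Csub C1 z)) in h by (unfold C1; cx_ring).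
  rewrite Cmod_mul in h. pose proof (Cmod_ge0 z). pose proof (Cmod_ge0 (Csub C1 z)).
  destruct (Rle_or_lt (Cmod z) r); auto.
  destruct (Rle_or_lt (Cmod (Csub C1 z)) r); auto. nra.
Qed.

(** Comparing the defect of rounded values with the defect of the original
    values: [p - q r = -(z - p) + (z - x y) + (x - q) y + q (y - r)]. *)
Lemma defect_perturbation (z x y : Cx) (p q r : bool) rz rx ry D :
  Cmod (Csub z (bC p)) <= rz -> Cmod (Csub x (bC q)) <= rx -> Cmod (Csub y (bC r)) <= ry ->
  Cmod (Csub z (Cmul x y)) <= D ->
  Cmod (Csub (bC p) (Cmul (bC q) (bC r))) <= rz + D + rx * (1 + ry) + ry.
Proof.
  intros hz hx hy hD.
  replace (Csub (bC p) (Cmul (bC q) (bC r))) with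
    (Cadd (Csub C0 (Csub z (bC p)))
      (Cadd (Csub z (Cmul x y))
        (Cadd (Cmul (Csub x (bC q)) y) (Cmul (bC q) (Csub y (bC r)))))) by cx_ring.
  assert (hy1 : Cmod y <= 1 + ry).
  { replace y with (Cadd (Csub y (bC r)) (bC r)) by cx_ring.
    eapply Rle_trans; [apply Cmod_add|]. pose proof (Cmod_bC r). lra. }
  eapply Rle_trans; [apply Cmod_add|]. rewrite Cmod_opp.
  eapply Rle_trans; [apply Rplus_le_compat_l, Cmod_add|].
  eapply Rle_trans; [apply Rplus_le_compat_l, Rplus_le_compat_l, Cmod_add|].
  rewrite !Cmod_mul. pose proof (Cmod_bC q). pose proof (Cmod_ge0 y).
  pose proof (Cmod_ge0 (Csub x (bC q))). pose proof (Cmod_ge0 (Csub y (bC r))).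
  pose proof (Cmod_ge0 (bC q)).
  assert (Cmod (Csub x (bC q)) * Cmod y <= rx * (1 + ry)) by (apply Rmult_le_compat; lra).
  assert (Cmod (bC q) * Cmod (Csub y (bC r)) <= ry) by nra.
  lra.
Qed.

Definition round01 (z : Cx) : bool :=
  if Rle_dec (Cmod (Csub C1 z)) (Cmod z) then true else false.

Lemma round01_close z r : Cmod z <= r \/ Cmod (Csub C1 z) <= r ->
  Cmod (Csub z (bC (round01 z))) <= r.
Proof.
  intros hz. unfold round01. destruct (Rle_dec _ _) as [h|h].
  - change (bC true) with C1. rewrite Cmod_sub_sym. destruct hz; lra.
  - change (bC false) with C0. replace (Csub z C0) with z by cx_ring. destruct hz; lra.
Qed.

Definition eq_dec_classic {T : Type} (x y : T) : {x = y} + {x <> y} :=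
  excluded_middle_informative (x = y).

Lemma Rsum_map {A B : Type} (f : B -> R) (g : A -> B) l :
  Rsum_list f (map g l) = Rsum_list (fun x => f (g x)) l.
Proof. induction l as [|a l IH]; [reflexivity|]. simpl. unfold Rsum_list in *; simpl. now rewrite IH. Qed.

Section Sums.
Variable I : Type.

Lemma Rsum_nil (f : I -> R) : Rsum_list f [] = 0. Proof. reflexivity. Qed.
Lemma Rsum_cons (f : I -> R) a l : Rsum_list f (a :: l) = f a + Rsum_list f l.
Proof. reflexivity. Qed.
Lemma Csum_cons (f : I -> Cx) a l : Csum_list f (a :: l) = Cadd (f a) (Csum_list f l).
Proof. reflexivity. Qed.

Lemma Rsum_app (f : I -> R) l1 l2 : Rsum_list f (l1 ++ l2) = Rsum_list f l1 + Rsum_list f l2.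
Proof. induction l1; simpl app; rewrite ?Rsum_nil, ?Rsum_cons; [ring | rewrite IHl1; ring]. Qed.

Lemma Rsum_le (f g : I -> R) l :
  (forall i, In i l -> f i <= g i) -> Rsum_list f l <= Rsum_list g l.
Proof.
  induction l as [|a l IH]; intros H; rewrite ?Rsum_nil, ?Rsum_cons; [lra|].
  assert (f a <= g a) by (apply H; left; auto).
  assert (Rsum_list f l <= Rsum_list g l) by (apply IH; intros; apply H; right; auto). lra.
Qed.
Lemma Rsum_nonneg (f : I -> R) l : (forall i, 0 <= f i) -> 0 <= Rsum_list f l.
Proof. intros H. induction l; rewrite ?Rsum_nil, ?Rsum_cons; [lra|]. specialize (H a). lra. Qed.
Lemma Rsum_plus (f g : I -> R) l :
  Rsum_list (fun i => f i + g i) l = Rsum_list f l + Rsum_list g l.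
Proof. induction l; rewrite ?Rsum_nil, ?Rsum_cons; [ring | rewrite IHl; ring]. Qed.
Lemma Rsum_scal (f : I -> R) c l : Rsum_list (fun i => c * f i) l = c * Rsum_list f l.
Proof. induction l; rewrite ?Rsum_nil, ?Rsum_cons; [ring | rewrite IHl; ring]. Qed.
Lemma Rsum_zero l : Rsum_list (fun _ : I => 0) l = 0.
Proof. induction l; rewrite ?Rsum_nil, ?Rsum_cons; [ring | rewrite IHl; ring]. Qed.
Lemma Rsum_perm (f : I -> R) l1 l2 : Permutation l1 l2 -> Rsum_list f l1 = Rsum_list f l2.
Proof. induction 1; rewrite ?Rsum_cons; try lra; congruence. Qed.

Lemma Csum_add (f g : I -> Cx) l :
  Csum_list (fun i => Cadd (f i) (g i)) l = Cadd (Csum_list f l) (Csum_list g l).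
Proof. induction l; simpl; [cx_ring | rewrite IHl; cx_ring]. Qed.
Lemma Csum_sub (f g : I -> Cx) l :
  Csum_list (fun i => Csub (f i) (g i)) l = Csub (Csum_list f l) (Csum_list g l).
Proof. induction l; simpl; [cx_ring | rewrite IHl; cx_ring]. Qed.
Lemma Csum_scale (f : I -> Cx) c l :
  Csum_list (fun i => Cmul c (f i)) l = Cmul c (Csum_list f l).
Proof. induction l; simpl; [cx_ring | rewrite IHl; cx_ring]. Qed.
Lemma Csum_real (g : I -> R) l : Csum_list (fun i => (g i, 0)) l = (Rsum_list g l, 0).
Proof. induction l; simpl; [reflexivity|]. rewrite IHl. unfold Rsum_list; simpl. cx_ring. Qed.
Lemma Cmod_Csum_le (f : I -> Cx) l : Cmod (Csum_list f l) <= Rsum_list (fun i => Cmod (f i)) l.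
Proof.
  induction l; rewrite ?Csum_cons, ?Rsum_nil, ?Rsum_cons; simpl.
  - rewrite Cmod_C0; lra.
  - eapply Rle_trans; [apply Cmod_add | lra].
Qed.

Definition inb (P : list I) (x : I) : bool :=
  if excluded_middle_informative (In x P) then true else false.
Lemma inb_true P x : inb P x = true <-> In x P.
Proof.
  unfold inb. destruct (excluded_middle_informative _); split; intros; auto;
    discriminate || contradiction.
Qed.

Lemma Rsum_filter (f : I -> R) (p : I -> bool) l :
  Rsum_list f l = Rsum_list f (filter p l) + Rsum_list f (filter (fun x => negb (p x)) l).
Proof.
  induction l; simpl filter; rewrite ?Rsum_nil; [ring|].
  destruct (p a); simpl; rewrite ?Rsum_cons; lra.
Qed.

Lemma Rsum_subset (g : I -> R) P Q : NoDup P -> NoDup Q -> incl P Q ->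
  (forall i, 0 <= g i) -> Rsum_list g P <= Rsum_list g Q.
Proof.
  intros HP HQ Hi Hg. rewrite (Rsum_filter g (inb P) Q).
  rewrite (Rsum_perm g P (filter (inb P) Q)).
  - pose proof (Rsum_nonneg g (filter (fun x => negb (inb P x)) Q) Hg). lra.
  - apply NoDup_Permutation; auto. apply NoDup_filter; auto.
    intros x. rewrite filter_In, inb_true. split; intros; try tauto. split; auto.
Qed.

Lemma common_superset (l1 l2 : list I) : exists l, NoDup l /\ incl l1 l /\ incl l2 l.
Proof.
  exists (nodup eq_dec_classic (l1 ++ l2)). split; [apply NoDup_nodup|].
  split; intros x hx; apply nodup_In, in_or_app; auto.
Qed.

Lemma Csum_zero (f : I -> Cx) l : (forall i, In i l -> f i = C0) -> Csum_list f l = C0.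
Proof.
  induction l as [|a l IH]; intros hz; [reflexivity|].
  rewrite Csum_cons, IH, hz; [cx_ring | left; auto | intros i hi; apply hz; right; auto].
Qed.

Lemma Csum_single (f : I -> Cx) i0 l : NoDup l -> In i0 l ->
  (forall i, i <> i0 -> f i = C0) -> Csum_list f l = f i0.
Proof.
  intros nd hin hz. induction nd as [|a l na nd IH]; [destruct hin|].
  rewrite Csum_cons. destruct hin as [<-|hin].
  - rewrite Csum_zero; [cx_ring|]. intros i hi. apply hz. intros ->. contradiction.
  - rewrite IH, hz; [cx_ring | | auto]. intros ->. contradiction.
Qed.

Lemma has_sum_unique (f : I -> Cx) L1 L2 : has_sum_C f L1 -> has_sum_C f L2 -> L1 = L2.
Proof.
  intros H1 H2. apply Cx_eq_of_dist_le0, Rle_plus_epsilon. intros e he.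
  destruct (H1 (e/2) ltac:(lra)) as [l1 h1]. destruct (H2 (e/2) ltac:(lra)) as [l2 h2].
  destruct (common_superset l1 l2) as [l [nd [i1 i2]]].
  specialize (h1 l nd i1). specialize (h2 l nd i2).
  eapply Rle_trans. apply (Cmod_tri _ (Csum_list f l)). rewrite Cmod_sub_sym. lra.
Qed.

Lemma has_sum_ext (f g : I -> Cx) L : (forall i, f i = g i) -> has_sum_C f L -> has_sum_C g L.
Proof. intros h. replace g with f; auto. apply functional_extensionality; auto. Qed.

Lemma has_sum_add (f g : I -> Cx) L M : has_sum_C f L -> has_sum_C g M ->
  has_sum_C (fun i => Cadd (f i) (g i)) (Cadd L M).
Proof.
  intros H1 H2 e he.
  destruct (H1 (e/2) ltac:(lra)) as [l1 h1]. destruct (H2 (e/2) ltac:(lra)) as [l2 h2].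
  exists (l1 ++ l2). intros l nd hi.
  destruct (incl_app_inv _ _ hi) as [i1 i2]. specialize (h1 l nd i1). specialize (h2 l nd i2).
  rewrite Csum_add.
  replace (Csub (Cadd (Csum_list f l) (Csum_list g l)) (Cadd L M)) with
    (Cadd (Csub (Csum_list f l) L) (Csub (Csum_list g l) M)) by cx_ring.
  eapply Rle_lt_trans; [apply Cmod_add | lra].
Qed.

Lemma has_sum_sub (f g : I -> Cx) L M : has_sum_C f L -> has_sum_C g M ->
  has_sum_C (fun i => Csub (f i) (g i)) (Csub L M).
Proof.
  intros H1 H2 e he.
  destruct (H1 (e/2) ltac:(lra)) as [l1 h1]. destruct (H2 (e/2) ltac:(lra)) as [l2 h2].
  exists (l1 ++ l2). intros l nd hi.
  destruct (incl_app_inv _ _ hi) as [i1 i2]. specialize (h1 l nd i1). specialize (h2 l nd i2).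
  rewrite Csum_sub.
  replace (Csub (Csub (Csum_list f l) (Csum_list g l)) (Csub L M)) with
    (Csub (Csub (Csum_list f l) L) (Csub (Csum_list g l) M)) by cx_ring.
  eapply Rle_lt_trans; [apply Cmod_sub | lra].
Qed.

Lemma has_sum_scale (f : I -> Cx) c L :
  has_sum_C f L -> has_sum_C (fun i => Cmul c (f i)) (Cmul c L).
Proof.
  intros H e he. pose proof (Cmod_ge0 c).
  destruct (H (e / (Cmod c + 1)) ltac:(apply Rdiv_lt_0_compat; lra)) as [l0 h0].
  exists l0. intros l nd hi. specialize (h0 l nd hi). rewrite Csum_scale.
  replace (Csub (Cmul c (Csum_list f l)) (Cmul c L)) with (Cmul c (Csub (Csum_list f l) L))
    by cx_ring.
  rewrite Cmod_mul.
  apply Rmult_lt_compat_l with (r := Cmod c + 1) in h0; [|lra].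
  replace ((Cmod c + 1) * (e / (Cmod c + 1))) with e in h0 by (field; lra).
  pose proof (Cmod_ge0 (Csub (Csum_list f l) L)). nra.
Qed.

Lemma has_sum_single (f : I -> Cx) i0 : (forall i, i <> i0 -> f i = C0) -> has_sum_C f (f i0).
Proof.
  intros hz e he. exists [i0]. intros l nd hi. rewrite (Csum_single f i0); auto.
  - replace (Csub (f i0) (f i0)) with C0 by cx_ring. rewrite Cmod_C0; auto.
  - apply hi; left; auto.
Qed.

Lemma has_sum_zero (f : I -> Cx) : (forall i, f i = C0) -> has_sum_C f C0.
Proof.
  intros hz e he. exists []. intros l _ _. rewrite Csum_zero by auto.
  replace (Csub C0 C0) with C0 by cx_ring. rewrite Cmod_C0; auto.
Qed.

Lemma has_sum_bound (f : I -> Cx) L B : has_sum_C f L ->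
  (forall l, NoDup l -> Rsum_list (fun i => Cmod (f i)) l <= B) -> Cmod L <= B.
Proof.
  intros hL hB. apply Rle_plus_epsilon. intros e he. destruct (hL e he) as [l0 h0].
  destruct (common_superset l0 []) as [l [nd [hl _]]]. specialize (h0 l nd hl).
  replace L with (Cadd (Csub L (Csum_list f l)) (Csum_list f l)) by cx_ring.
  eapply Rle_trans; [apply Cmod_add|]. rewrite Cmod_sub_sym.
  pose proof (Cmod_Csum_le f l). specialize (hB l nd). lra.
Qed.

Lemma sup_finite_sums (g : I -> R) B : (forall l, NoDup l -> Rsum_list g l <= B) ->
  exists s, (forall l, NoDup l -> Rsum_list g l <= s) /\
    forall e, 0 < e -> exists l, NoDup l /\ s - e < Rsum_list g l.
Proof.
  intros HB.
  set (E := fun r => exists l, NoDup l /\ r = Rsum_list g l).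
  destruct (completeness E) as [m [hub hl]].
  - exists B. intros r [l [nd ->]]. auto.
  - exists 0, []. split; [constructor | reflexivity].
  - exists m. split.
    + intros l nd. apply hub. exists l; auto.
    + intros e he. apply NNPP. intros h.
      assert (m <= m - e); [|lra]. apply hl. intros r [l [nd ->]].
      destruct (Rle_or_lt (Rsum_list g l) (m - e)); auto.
      exfalso; apply h; exists l; auto.
Qed.

Lemma summable_tail_small (g : I -> R) B : (forall i, 0 <= g i) ->
  (forall l, NoDup l -> Rsum_list g l <= B) ->
  forall gam, 0 < gam -> exists l0, NoDup l0 /\
    forall l, NoDup l -> (forall i, In i l -> ~ In i l0) -> Rsum_list g l <= gam.
Proof.
  intros hg HB gam hgam. destruct (sup_finite_sums g B HB) as [s [h1 h2]].
  destruct (h2 gam hgam) as [l0 [nd0 h0]]. exists l0. split; auto. intros l nd hd.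
  specialize (h1 (l ++ l0) (NoDup_app nd nd0 hd)). rewrite Rsum_app in h1. lra.
Qed.

Lemma has_sum_nonneg (g : I -> R) B : (forall i, 0 <= g i) ->
  (forall l, NoDup l -> Rsum_list g l <= B) -> exists s, has_sum_C (fun i => (g i, 0)) (s, 0).
Proof.
  intros hg HB. destruct (sup_finite_sums g B HB) as [s [h1 h2]]. exists s. intros e he.
  destruct (h2 e he) as [l0 [nd0 h0]]. exists l0. intros l nd hi.
  rewrite Csum_real. replace (Csub (Rsum_list g l, 0) (s, 0)) with (Rsum_list g l - s, 0)
    by cx_ring.
  rewrite Cmod_real. pose proof (Rsum_subset g l0 l nd0 nd hi hg). specialize (h1 l nd).
  apply Rabs_def1; lra.
Qed.

(** Real families dominated by the moduli of an absolutely summable family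
    are summable: split them into positive and negative parts. *)
Lemma has_sum_dominated_real (f : I -> Cx) (h : I -> R) B :
  (forall l, NoDup l -> Rsum_list (fun i => Cmod (f i)) l <= B) ->
  (forall i, Rabs (h i) <= Cmod (f i)) -> exists s, has_sum_C (fun i => (h i, 0)) (s, 0).
Proof.
  intros HB hh.
  assert (Hpart : forall k : I -> R, (forall i, Rabs (k i) <= Cmod (f i)) ->
    exists s, has_sum_C (fun i => (Rmax (k i) 0, 0)) (s, 0)).
  { intros k hk. apply (has_sum_nonneg _ B); [intros; apply Rmax_r|].
    intros l nd. eapply Rle_trans; [|apply (HB l nd)]. apply Rsum_le. intros i _.
    specialize (hk i). pose proof (Rle_abs (k i)). pose proof (Rabs_pos (k i)).
    apply Rmax_lub; lra. }
  destruct (Hpart h hh) as [s1 hs1].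
  destruct (Hpart (fun i => - h i)) as [s2 hs2].
  { intros i. rewrite Rabs_Ropp. apply hh. }
  exists (s1 - s2). replace (s1 - s2, 0) with (Csub (s1, 0) (s2, 0)) by cx_ring.
  apply (has_sum_ext (fun i => Csub (Rmax (h i) 0, 0) (Rmax (- h i) 0, 0))).
  - intros i. unfold Csub; simpl. f_equal; [|lra].
    unfold Rmax; destruct (Rle_dec _ _); destruct (Rle_dec _ _); lra.
  - apply has_sum_sub; auto.
Qed.

(** Absolutely summable families are summable (real and imaginary parts). *)
Lemma has_sum_exists (f : I -> Cx) B :
  (forall l, NoDup l -> Rsum_list (fun i => Cmod (f i)) l <= B) -> exists L, has_sum_C f L.
Proof.
  intros HB.
  assert (Hre : forall i, Rabs (fst (f i)) <= Cmod (f i)).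
  { intros i. unfold Cmod. rewrite <- sqrt_Rsqr_abs. apply sqrt_le_1_alt. unfold Rsqr; nra. }
  assert (Him : forall i, Rabs (snd (f i)) <= Cmod (f i)).
  { intros i. unfold Cmod. rewrite <- sqrt_Rsqr_abs. apply sqrt_le_1_alt. unfold Rsqr; nra. }
  destruct (has_sum_dominated_real f _ B HB Hre) as [a ha].
  destruct (has_sum_dominated_real f _ B HB Him) as [b hb].
  exists (Cadd (a, 0) (Cmul (0, 1) (b, 0))).
  apply (has_sum_ext (fun i => Cadd (fst (f i), 0) (Cmul (0, 1) (snd (f i), 0)))).
  - intros i. destruct (f i). cx_ring.
  - apply has_sum_add; [|apply has_sum_scale]; auto.
Qed.

Definition usum (f : I -> Cx) : Cx :=
  match excluded_middle_informative (exists L, has_sum_C f L) with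
  | left H => proj1_sig (constructive_indefinite_description _ H)
  | right _ => C0
  end.

Lemma usum_spec (f : I -> Cx) : (exists L, has_sum_C f L) -> has_sum_C f (usum f).
Proof.
  intros H. unfold usum. destruct (excluded_middle_informative _) as [H'|H']; [|contradiction].
  apply (proj2_sig (constructive_indefinite_description _ H')).
Qed.

End Sums.

Lemma NoDup_prod {A B : Type} (l1 : list A) (l2 : list B) :
  NoDup l1 -> NoDup l2 -> NoDup (list_prod l1 l2).
Proof.
  intros n1 n2. induction n1 as [|a l1 na n1 IH]; [constructor|]. simpl. apply NoDup_app; auto.
  - apply FinFun.Injective_map_NoDup; auto. intros y1 y2 h. injection h; auto.
  - intros p hp hq. apply in_map_iff in hp. destruct hp as [y [<- _]].
    apply in_prod_iff in hq. tauto.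
Qed.

Lemma Rsum_prod {A B : Type} (X : A -> R) (Y : B -> R) l1 l2 :
  Rsum_list (fun p => X (fst p) * Y (snd p)) (list_prod l1 l2) = Rsum_list X l1 * Rsum_list Y l2.
Proof.
  induction l1 as [|a l1 IH]; [unfold Rsum_list; simpl; ring|].
  simpl list_prod. rewrite Rsum_app, IH, Rsum_map, Rsum_cons. simpl.
  rewrite (Rsum_scal B Y (X a)). ring.
Qed.

Lemma Rsum_pairs_bound {A B : Type} (X : A -> R) (Y : B -> R) Nx Ny (P : list (A * B)) :
  (forall s, 0 <= X s) -> (forall t, 0 <= Y t) ->
  (forall l, NoDup l -> Rsum_list X l <= Nx) -> (forall l, NoDup l -> Rsum_list Y l <= Ny) ->
  NoDup P -> Rsum_list (fun p => X (fst p) * Y (snd p)) P <= Nx * Ny.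
Proof.
  intros hX hY bX bY nP.
  set (L1 := nodup eq_dec_classic (map fst P)). set (L2 := nodup eq_dec_classic (map snd P)).
  eapply Rle_trans.
  - apply (Rsum_subset (A * B) _ P (list_prod L1 L2)); auto.
    + apply NoDup_prod; apply NoDup_nodup.
    + intros [s t] hp. apply in_prod_iff. unfold L1, L2. rewrite !nodup_In.
      split; apply in_map_iff; exists (s, t); auto.
    + intros [s t]. simpl. specialize (hX s); specialize (hY t). nra.
  - rewrite Rsum_prod. pose proof (bX L1 (NoDup_nodup _ _)). pose proof (bY L2 (NoDup_nodup _ _)).
    pose proof (Rsum_nonneg A X L1 hX). pose proof (Rsum_nonneg B Y L2 hY). nra.
Qed.

Section Weighted.
Variable S : Type.
Variable w : S -> R.
Hypothesis Hw : is_weight w.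

Definition delta (s : S) : S -> Cx := fun u => if eq_dec_classic u s then C1 else C0.

Lemma delta_same s : delta s s = C1.
Proof. unfold delta. destruct (eq_dec_classic s s); [auto | contradiction]. Qed.
Lemma delta_zero s u : u <> s -> delta s u = C0.
Proof. intros h. unfold delta. destruct (eq_dec_classic u s); [contradiction | auto]. Qed.

Lemma l1_norm_nonneg a N : l1_norm_le w a N -> 0 <= N.
Proof. intros h. exact (h [] (NoDup_nil _)). Qed.

Lemma l1_dominated a b N : (forall s, Cmod (b s) <= Cmod (a s)) ->
  l1_norm_le w a N -> l1_norm_le w b N.
Proof.
  intros hab ha l nd. eapply Rle_trans; [|apply (ha l nd)]. apply Rsum_le. intros s _.
  pose proof (Hw s). specialize (hab s). nra.
Qed.

Lemma l1_add a b Na Nb : l1_norm_le w a Na -> l1_norm_le w b Nb ->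
  l1_norm_le w (fadd a b) (Na + Nb).
Proof.
  intros ha hb l nd. specialize (ha l nd). specialize (hb l nd).
  eapply Rle_trans; [|apply Rplus_le_compat; eauto]. rewrite <- Rsum_plus. apply Rsum_le.
  intros i _. unfold fadd. pose proof (Cmod_add (a i) (b i)). pose proof (Hw i). nra.
Qed.

Lemma l1_scale c a N : l1_norm_le w a N -> l1_norm_le w (fscale c a) (Cmod c * N).
Proof.
  intros ha l nd. specialize (ha l nd). pose proof (Cmod_ge0 c).
  replace (Rsum_list (fun s => Cmod (fscale c a s) * w s) l)
    with (Cmod c * Rsum_list (fun s => Cmod (a s) * w s) l); [nra|].
  rewrite <- Rsum_scal. f_equal. apply functional_extensionality. intros s.
  unfold fscale. rewrite Cmod_mul. ring.
Qed.

Lemma l1_single (a : S -> Cx) s : (forall u, u <> s -> a u = C0) ->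
  l1_norm_le w a (Cmod (a s) * w s).
Proof.
  intros hz l nd. induction nd as [|u l nu nd IH]; [apply Rmult_le_pos; [apply Cmod_ge0 | apply Rlt_le, Hw]|].
  rewrite Rsum_cons. destruct (eq_dec_classic u s) as [->|ne].
  - assert (Rsum_list (fun v => Cmod (a v) * w v) l <= Rsum_list (fun _ => 0) l).
    { apply Rsum_le. intros v hv. rewrite hz, Cmod_C0; [lra|]. intros ->. contradiction. }
    rewrite Rsum_zero in H. lra.
  - rewrite hz, Cmod_C0; [lra | auto].
Qed.

Lemma l1_scaled_delta c s : l1_norm_le w (fscale c (delta s)) (Cmod c * w s).
Proof.
  assert (hz : forall u, u <> s -> fscale c (delta s) u = C0).
  { intros u h. unfold fscale. rewrite delta_zero; auto. cx_ring. }
  pose proof (l1_single _ s hz) as H. unfold fscale at 2 in H.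
  rewrite delta_same, Cmod_mul in H. unfold C1 in H. rewrite Cmod_real, Rabs_R1, Rmult_1_r in H.
  exact H.
Qed.

Lemma l1_delta s : l1_norm_le w (delta s) (w s).
Proof.
  pose proof (l1_single (delta s) s (delta_zero s)) as H.
  rewrite delta_same in H. unfold C1 in H. rewrite Cmod_real, Rabs_R1, Rmult_1_l in H. exact H.
Qed.

Lemma in_l1_add a b : in_l1 w a -> in_l1 w b -> in_l1 w (fadd a b).
Proof. intros [r1 h1] [r2 h2]. exists (r1 + r2). apply l1_add; auto. Qed.
Lemma in_l1_scale c a : in_l1 w a -> in_l1 w (fscale c a).
Proof. intros [r h]. exists (Cmod c * r). apply l1_scale; auto. Qed.
Lemma in_l1_delta s : in_l1 w (delta s).
Proof. exists (w s). apply l1_delta. Qed.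
Lemma in_l1_scaled_delta c s : in_l1 w (fscale c (delta s)).
Proof. exists (Cmod c * w s). apply l1_scaled_delta. Qed.
Lemma in_l1_zero : in_l1 w (fun _ => C0).
Proof.
  exists 0. intros l _. rewrite <- (Rsum_zero S l). apply Rsum_le. intros s _.
  rewrite Cmod_C0. lra.
Qed.

Definition restr (a : S -> Cx) (l : list S) : S -> Cx :=
  fun s => if inb S l s then a s else C0.
Definition restr_compl (a : S -> Cx) (l : list S) : S -> Cx :=
  fun s => if inb S l s then C0 else a s.

Lemma restr_split a l : a = fadd (restr a l) (restr_compl a l).
Proof.
  apply functional_extensionality; intros u. unfold fadd, restr, restr_compl.
  destruct (inb S l u); cx_ring.
Qed.

Lemma in_l1_restr a l : in_l1 w a -> in_l1 w (restr a l).
Proof.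
  intros [r hr]. exists r. apply (l1_dominated a); auto. intros s. unfold restr.
  destruct (inb S l s); [lra | rewrite Cmod_C0; apply Cmod_ge0].
Qed.

Lemma in_l1_restr_compl a l : in_l1 w a -> in_l1 w (restr_compl a l).
Proof.
  intros [r hr]. exists r. apply (l1_dominated a); auto. intros s. unfold restr_compl.
  destruct (inb S l s); [rewrite Cmod_C0; apply Cmod_ge0 | lra].
Qed.

Lemma restr_nil a : restr a [] = fun _ => C0.
Proof.
  apply functional_extensionality; intros u. unfold restr.
  destruct (inb S [] u) eqn:E; auto. apply inb_true in E. destruct E.
Qed.

Lemma restr_cons a x l : ~ In x l ->
  restr a (x :: l) = fadd (fscale (a x) (delta x)) (restr a l).
Proof.
  intros hx. apply functional_extensionality; intros u. unfold restr, fadd, fscale, inb.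
  destruct (eq_dec_classic u x) as [->|ne].
  - rewrite delta_same.
    destruct (excluded_middle_informative (In x (x :: l))) as [_|h]; [|exfalso; apply h; left; auto].
    destruct (excluded_middle_informative (In x l)); [contradiction|]. unfold C1; cx_ring.
  - rewrite delta_zero by auto.
    destruct (excluded_middle_informative (In u (x :: l))) as [h1|h1];
    destruct (excluded_middle_informative (In u l)) as [h2|h2]; try cx_ring.
    + destruct h1 as [->|h1]; [contradiction ne; auto | contradiction].
    + exfalso. apply h1. right. auto.
Qed.

Lemma l1_restr_compl a l0 gam :
  (forall l, NoDup l -> (forall i, In i l -> ~ In i l0) ->
     Rsum_list (fun s => Cmod (a s) * w s) l <= gam) ->
  l1_norm_le w (restr_compl a l0) gam.
Proof.
  intros htail l nd. rewrite (Rsum_filter _ _ (inb S l0) l).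
  assert (Rsum_list (fun s => Cmod (restr_compl a l0 s) * w s) (filter (inb S l0) l) <= 0).
  { rewrite <- (Rsum_zero S (filter (inb S l0) l)). apply Rsum_le. intros i hi.
    apply filter_In in hi. destruct hi as [_ hi]. unfold restr_compl. rewrite hi, Cmod_C0. lra. }
  assert (Rsum_list (fun s => Cmod (restr_compl a l0 s) * w s)
            (filter (fun x => negb (inb S l0 x)) l) <= gam).
  { eapply Rle_trans; [|apply (htail (filter (fun x => negb (inb S l0 x)) l))].
    - apply Rsum_le. intros i hi. apply filter_In in hi. destruct hi as [_ hi].
      unfold restr_compl. destruct (inb S l0 i); [discriminate | lra].
    - apply NoDup_filter; auto.
    - intros i hi hin. apply filter_In in hi. destruct hi as [_ hi].
      apply inb_true in hin. rewrite hin in hi. discriminate. }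
  lra.
Qed.

Section Density.
Variable Psi : (S -> Cx) -> Cx.
Hypothesis HPsi : in_dual w Psi.

Lemma dual_zero : Psi (fun _ => C0) = C0.
Proof.
  destruct HPsi as [[_ Hscale] _].
  replace (fun _ : S => C0) with (fscale C0 (fun _ : S => C0)).
  - rewrite Hscale by apply in_l1_zero. cx_ring.
  - apply functional_extensionality; intros; unfold fscale; cx_ring.
Qed.

Lemma dual_restr a l : in_l1 w a -> NoDup l ->
  Psi (restr a l) = Csum_list (fun s => Cmul (a s) (Psi (delta s))) l.
Proof.
  destruct HPsi as [[Hadd Hscale] _]. intros ha nd. induction nd as [|x l hx nd IH].
  - rewrite restr_nil, dual_zero. reflexivity.
  - rewrite restr_cons, Hadd, Hscale, IH, Csum_cons by
      (auto using in_l1_delta, in_l1_scaled_delta, in_l1_restr).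
    reflexivity.
Qed.

(** A bounded functional with [|Psi(delta_s)| <= c w(s)] has norm at most [c]:
    split [a] into a finite part, controlled by the point values, and a tail
    of small norm, controlled by the a-priori bound. *)
Lemma dual_bound_from_points c : 0 <= c -> (forall s, Cmod (Psi (delta s)) <= c * w s) ->
  forall a N, in_l1 w a -> l1_norm_le w a N -> Cmod (Psi a) <= c * N.
Proof.
  intros hc Hd a N ha hN. destruct HPsi as [[Hadd _] [M HM]].
  apply Rle_plus_epsilon. intros e he.
  pose proof ha as [r hr].
  set (g := fun s => Cmod (a s) * w s).
  assert (hg : forall s, 0 <= g s).
  { intros s. unfold g. pose proof (Cmod_ge0 (a s)); pose proof (Hw s); nra. }
  set (gam := e / (Rabs M + 1)).
  assert (hgam : 0 < gam).
  { unfold gam. apply Rdiv_lt_0_compat; auto. pose proof (Rabs_pos M); lra. }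
  destruct (summable_tail_small S g r hg hr gam hgam) as [l0 [nd0 htail]].
  assert (Hfinite : Cmod (Psi (restr a l0)) <= c * N).
  { rewrite dual_restr by auto. eapply Rle_trans; [apply Cmod_Csum_le|].
    apply Rle_trans with (Rsum_list (fun s => c * g s) l0).
    - apply Rsum_le. intros i _. rewrite Cmod_mul. unfold g.
      specialize (Hd i). pose proof (Cmod_ge0 (a i)). nra.
    - rewrite Rsum_scal. specialize (hN l0 nd0). fold g in hN. nra. }
  assert (Htail_norm : l1_norm_le w (restr_compl a l0) gam) by (apply l1_restr_compl; auto).
  assert (Htail : Cmod (Psi (restr_compl a l0)) <= e).
  { eapply Rle_trans; [apply (HM _ gam); auto using in_l1_restr_compl|].
    assert (gam * (Rabs M + 1) = e) by (unfold gam; field; pose proof (Rabs_pos M); lra).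
    pose proof (Rle_abs M). pose proof (Rabs_pos M). nra. }
  rewrite (restr_split a l0), Hadd by auto using in_l1_restr, in_l1_restr_compl.
  eapply Rle_trans; [apply Cmod_add | lra].
Qed.

End Density.

Lemma in_dual_sub Psi Phi : in_dual w Psi -> in_dual w Phi ->
  in_dual w (fun a => Csub (Psi a) (Phi a)).
Proof.
  intros [[Ha1 Hs1] [M1 HM1]] [[Ha2 Hs2] [M2 HM2]]. split; [split|].
  - intros a b ha hb. rewrite Ha1, Ha2 by auto. cx_ring.
  - intros c a ha. rewrite Hs1, Hs2 by auto. cx_ring.
  - exists (M1 + M2). intros a N ha hN. eapply Rle_trans; [apply Cmod_sub|].
    specialize (HM1 a N ha hN). specialize (HM2 a N ha hN). lra.
Qed.

Lemma in_dual_cmul c Psi : in_dual w Psi -> in_dual w (fun a => Cmul c (Psi a)).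
Proof.
  intros [[Ha Hs] [M HM]]. split; [split|].
  - intros a b ha hb. rewrite Ha by auto. cx_ring.
  - intros k a ha. rewrite Hs by auto. cx_ring.
  - exists (Cmod c * M). intros a N ha hN. rewrite Cmod_mul.
    specialize (HM a N ha hN). pose proof (Cmod_ge0 c). nra.
Qed.

(** For [th : S -> bool] these are the candidate characters; they have norm
    at most [1] as soon as the weight is at least [1]. *)

Section Theta.
Hypothesis Hw1 : forall s, 1 <= w s.

Definition mask (th : S -> bool) (a : S -> Cx) : S -> Cx := fun s => if th s then a s else C0.
Definition Theta (th : S -> bool) (a : S -> Cx) : Cx := usum S (mask th a).

Lemma mask_bound th a N : l1_norm_le w a N ->
  forall l, NoDup l -> Rsum_list (fun s => Cmod (mask th a s)) l <= N.
Proof.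
  intros ha l nd. eapply Rle_trans; [|apply (ha l nd)]. apply Rsum_le. intros s _.
  unfold mask. pose proof (Hw1 s). pose proof (Cmod_ge0 (a s)).
  destruct (th s); [nra | rewrite Cmod_C0; nra].
Qed.

Lemma Theta_spec th a : in_l1 w a -> has_sum_C (mask th a) (Theta th a).
Proof.
  intros [r hr]. apply usum_spec. apply (has_sum_exists S _ r). apply mask_bound; auto.
Qed.

Lemma Theta_bound th a N : in_l1 w a -> l1_norm_le w a N -> Cmod (Theta th a) <= N.
Proof. intros ha hN. apply (has_sum_bound S (mask th a)); [apply Theta_spec | apply mask_bound]; auto. Qed.

Lemma Theta_delta th s : Theta th (delta s) = bC (th s).
Proof.
  apply (has_sum_unique S (mask th (delta s))); [apply Theta_spec, in_l1_delta|].
  replace (bC (th s)) with (mask th (delta s) s).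
  - apply has_sum_single. intros u hu. unfold mask. rewrite delta_zero; auto. destruct (th u); auto.
  - unfold mask, bC, b2R. rewrite delta_same. destruct (th s); reflexivity.
Qed.

Lemma Theta_dual th : in_dual w (Theta th).
Proof.
  split; [split|].
  - intros a b ha hb. apply (has_sum_unique S (mask th (fadd a b))).
    + apply Theta_spec, in_l1_add; auto.
    + apply (has_sum_ext S (fun s => Cadd (mask th a s) (mask th b s))).
      * intros s. unfold mask, fadd. destruct (th s); auto. cx_ring.
      * apply has_sum_add; apply Theta_spec; auto.
  - intros c a ha. apply (has_sum_unique S (mask th (fscale c a))).
    + apply Theta_spec, in_l1_scale; auto.
    + apply (has_sum_ext S (fun s => Cmul c (mask th a s))).
      * intros s. unfold mask, fscale. destruct (th s); auto. cx_ring.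
      * apply has_sum_scale, Theta_spec; auto.
  - exists 1. intros a N ha hN. rewrite Rmult_1_l. apply Theta_bound; auto.
Qed.

Variable op : S -> S -> S.
Hypothesis Hsub : submultiplicative op w.

Definition fib (u : S) : Type := { st : S * S | op (fst st) (snd st) = u }.
Definition conv_term (x y : S -> Cx) (u : S) (p : fib u) : Cx :=
  Cmul (x (fst (proj1_sig p))) (y (snd (proj1_sig p))).

Lemma fib_proj_inj u : FinFun.Injective (fun p : fib u => proj1_sig p).
Proof. intros [a ha] [b hb] h. simpl in h. subst. f_equal. apply proof_irrelevance. Qed.

(** The terms of [(x * y)(u)] are absolutely summable, as [w >= 1]. *)
Lemma conv_term_bound x y Nx Ny u : l1_norm_le w x Nx -> l1_norm_le w y Ny ->
  forall l, NoDup l -> Rsum_list (fun p => Cmod (conv_term x y u p)) l <= Nx * Ny.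
Proof.
  intros hx hy l nd.
  eapply Rle_trans; [|apply (Rsum_pairs_bound (fun s => Cmod (x s) * w s)
     (fun t => Cmod (y t) * w t) Nx Ny (map (fun p : fib u => proj1_sig p) l))]; auto.
  - rewrite Rsum_map. apply Rsum_le. intros [[s t] e] _. unfold conv_term. simpl.
    rewrite Cmod_mul. pose proof (Hw1 s). pose proof (Hw1 t).
    pose proof (Cmod_ge0 (x s)). pose proof (Cmod_ge0 (y t)).
    apply Rmult_le_compat; nra.
  - intros s. pose proof (Cmod_ge0 (x s)); pose proof (Hw s); nra.
  - intros t. pose proof (Cmod_ge0 (y t)); pose proof (Hw t); nra.
  - apply FinFun.Injective_map_NoDup; auto. apply fib_proj_inj.
Qed.

Definition cv (x y : S -> Cx) : S -> Cx := fun u => usum (fib u) (conv_term x y u).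

Lemma cv_spec x y u : in_l1 w x -> in_l1 w y -> has_sum_C (conv_term x y u) (cv x y u).
Proof.
  intros [r1 h1] [r2 h2]. apply usum_spec, (has_sum_exists _ _ (r1 * r2)).
  apply conv_term_bound; auto.
Qed.

Lemma cv_conv x y : in_l1 w x -> in_l1 w y -> conv op x y (cv x y).
Proof. intros hx hy u. apply (cv_spec x y u hx hy). Qed.

Lemma conv_cv x y z : in_l1 w x -> in_l1 w y -> conv op x y z -> z = cv x y.
Proof.
  intros hx hy hz. apply functional_extensionality; intros u.
  apply (has_sum_unique _ (conv_term x y u)); [apply (hz u) | apply cv_spec; auto].
Qed.

Lemma cv_delta s t : cv (delta s) (delta t) = delta (op s t).
Proof.
  symmetry. apply conv_cv; try apply in_l1_delta. intros u.
  assert (Hoff : forall a b, (a, b) <> (s, t) -> Cmul (delta s a) (delta t b) = C0).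
  { intros a b hab. destruct (eq_dec_classic a s) as [->|na].
    - rewrite (delta_zero t b); [cx_ring|]. intros ->. contradiction.
    - rewrite (delta_zero s a na). cx_ring. }
  destruct (eq_dec_classic (op s t) u) as [e|ne].
  - set (i0 := exist (fun st : S * S => op (fst st) (snd st) = u) (s, t) e).
    replace (delta (op s t) u) with (conv_term (delta s) (delta t) u i0).
    + apply has_sum_single. intros [[a b] hab] hne. apply Hoff. intros h. injection h; intros; subst.
      apply hne. unfold i0. f_equal. apply proof_irrelevance.
    + unfold conv_term, i0; simpl. rewrite !delta_same. subst u. rewrite delta_same.
      unfold C1; cx_ring.
  - rewrite delta_zero by auto. apply has_sum_zero. intros [[a b] hab]. apply Hoff.
    intros h. injection h; intros; subst. contradiction.
Qed.

Lemma cv_add_l x x' y : in_l1 w x -> in_l1 w x' -> in_l1 w y ->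
  cv (fadd x x') y = fadd (cv x y) (cv x' y).
Proof.
  intros h1 h2 h3. symmetry. apply conv_cv; auto using in_l1_add. intros u.
  apply (has_sum_ext _ (fun p => Cadd (conv_term x y u p) (conv_term x' y u p))).
  - intros p. unfold conv_term, fadd. cx_ring.
  - apply has_sum_add; apply cv_spec; auto.
Qed.
Lemma cv_add_r x y y' : in_l1 w x -> in_l1 w y -> in_l1 w y' ->
  cv x (fadd y y') = fadd (cv x y) (cv x y').
Proof.
  intros h1 h2 h3. symmetry. apply conv_cv; auto using in_l1_add. intros u.
  apply (has_sum_ext _ (fun p => Cadd (conv_term x y u p) (conv_term x y' u p))).
  - intros p. unfold conv_term, fadd. cx_ring.
  - apply has_sum_add; apply cv_spec; auto.
Qed.
Lemma cv_scale_l c x y : in_l1 w x -> in_l1 w y -> cv (fscale c x) y = fscale c (cv x y).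
Proof.
  intros h1 h2. symmetry. apply conv_cv; auto using in_l1_scale. intros u.
  apply (has_sum_ext _ (fun p => Cmul c (conv_term x y u p))).
  - intros p. unfold conv_term, fscale. cx_ring.
  - apply has_sum_scale, cv_spec; auto.
Qed.
Lemma cv_scale_r c x y : in_l1 w x -> in_l1 w y -> cv x (fscale c y) = fscale c (cv x y).
Proof.
  intros h1 h2. symmetry. apply conv_cv; auto using in_l1_scale. intros u.
  apply (has_sum_ext _ (fun p => Cmul c (conv_term x y u p))).
  - intros p. unfold conv_term, fscale. cx_ring.
  - apply has_sum_scale, cv_spec; auto.
Qed.

Definition wprod (x y : S -> Cx) (p : S * S) : R :=
  (Cmod (x (fst p)) * w (fst p)) * (Cmod (y (snd p)) * w (snd p)).

(** Up to [gam], [|(x * y)(u)| w(u)] is a finite sum of weighted products over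
    the fibre of [u]; this is where submultiplicativity is used. *)
Lemma cv_point_cover x y u : in_l1 w x -> in_l1 w y -> forall gam, 0 < gam ->
  exists lu : list (fib u), NoDup lu /\
    Cmod (cv x y u) * w u <= Rsum_list (fun p : fib u => wprod x y (proj1_sig p)) lu + gam.
Proof.
  intros hx hy gam hg. pose proof (Hw u) as wu.
  assert (he : 0 < gam / w u) by (apply Rdiv_lt_0_compat; lra).
  destruct (cv_spec x y u hx hy _ he) as [l0 h0].
  destruct (common_superset _ l0 []) as [lu [ndu [hlu _]]].
  specialize (h0 lu ndu hlu). exists lu. split; auto.
  assert (h1 : Cmod (cv x y u) <= Rsum_list (fun p => Cmod (conv_term x y u p)) lu + gam / w u).
  { replace (cv x y u) with
      (Cadd (Csub (cv x y u) (Csum_list (conv_term x y u) lu)) (Csum_list (conv_term x y u) lu))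
      by cx_ring.
    eapply Rle_trans; [apply Cmod_add|]. rewrite Cmod_sub_sym.
    pose proof (Cmod_Csum_le _ (conv_term x y u) lu). lra. }
  assert (h2 : Rsum_list (fun p => Cmod (conv_term x y u p)) lu * w u
               <= Rsum_list (fun p : fib u => wprod x y (proj1_sig p)) lu).
  { rewrite Rmult_comm, <- Rsum_scal. apply Rsum_le. intros [[s t] e] _.
    unfold conv_term, wprod; simpl in *. rewrite Cmod_mul. pose proof (Hsub s t) as hst.
    rewrite e in hst. pose proof (Cmod_ge0 (x s)). pose proof (Cmod_ge0 (y t)).
    assert (0 <= Cmod (x s) * Cmod (y t)) by nra. nra. }
  apply (Rmult_le_compat_r (w u)) in h1; [|lra]. rewrite Rmult_plus_distr_r in h1.
  assert (gam / w u * w u = gam) by (field; lra). lra.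
Qed.

Lemma cv_norm_cover x y : in_l1 w x -> in_l1 w y -> forall U, NoDup U -> forall gam, 0 < gam ->
  exists P, NoDup P /\ (forall p, In p P -> In (op (fst p) (snd p)) U) /\
    Rsum_list (fun u => Cmod (cv x y u) * w u) U <= Rsum_list (wprod x y) P + gam.
Proof.
  intros hx hy U nd. induction nd as [|u U nu nd IH]; intros gam hg.
  - exists []. split; [constructor|]. split; [intros p []|]. rewrite !Rsum_nil. lra.
  - destruct (IH (gam / 2) ltac:(lra)) as [P [nP [hP sP]]].
    destruct (cv_point_cover x y u hx hy (gam / 2) ltac:(lra)) as [lu [ndu hu]].
    exists (map (fun p : fib u => proj1_sig p) lu ++ P). split; [|split].
    + apply NoDup_app; auto.
      * apply FinFun.Injective_map_NoDup; auto. apply fib_proj_inj.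
      * intros p hp hq. apply in_map_iff in hp. destruct hp as [[q e] [<- _]]. simpl in hq.
        apply hP in hq. simpl in e. rewrite e in hq. contradiction.
    + intros p hp. apply in_app_or in hp. destruct hp as [hp|hp].
      * apply in_map_iff in hp. destruct hp as [[q e] [<- _]]. simpl. left. auto.
      * right. auto.
    + rewrite Rsum_cons, Rsum_app, Rsum_map. lra.
Qed.

Lemma cv_norm x y Nx Ny : in_l1 w x -> in_l1 w y -> l1_norm_le w x Nx -> l1_norm_le w y Ny ->
  l1_norm_le w (cv x y) (Nx * Ny).
Proof.
  intros hx hy bx by_ U nd. apply Rle_plus_epsilon. intros e he.
  destruct (cv_norm_cover x y hx hy U nd e he) as [P [nP [_ sP]]].
  enough (Rsum_list (wprod x y) P <= Nx * Ny) by lra.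
  apply (Rsum_pairs_bound (fun s => Cmod (x s) * w s) (fun t => Cmod (y t) * w t)); auto;
    intros s; pose proof (Hw s); [pose proof (Cmod_ge0 (x s)) | pose proof (Cmod_ge0 (y s))]; nra.
Qed.

Lemma in_l1_cv x y : in_l1 w x -> in_l1 w y -> in_l1 w (cv x y).
Proof. intros hx hy. pose proof hx as [r1 h1]. pose proof hy as [r2 h2]. exists (r1 * r2). apply cv_norm; auto. Qed.

Lemma in_dual_cv_r Psi y : in_dual w Psi -> in_l1 w y -> in_dual w (fun x => Psi (cv x y)).
Proof.
  intros [[Ha Hs] [M HM]] hy. pose proof hy as [Ny bY]. split; [split|].
  - intros a b ha hb. rewrite cv_add_l, Ha by auto using in_l1_cv. reflexivity.
  - intros c a ha. rewrite cv_scale_l, Hs by auto using in_l1_cv. reflexivity.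
  - exists (M * Ny). intros a N ha hN.
    replace (M * Ny * N) with (M * (N * Ny)) by ring. apply HM; auto using in_l1_cv, cv_norm.
Qed.

Lemma in_dual_cv_l Psi x : in_dual w Psi -> in_l1 w x -> in_dual w (fun y => Psi (cv x y)).
Proof.
  intros [[Ha Hs] [M HM]] hx. pose proof hx as [Nx bx]. split; [split|].
  - intros a b ha hb. rewrite cv_add_r, Ha by auto using in_l1_cv. reflexivity.
  - intros c a ha. rewrite cv_scale_r, Hs by auto using in_l1_cv. reflexivity.
  - exists (M * Nx). intros a N ha hN.
    replace (M * Nx * N) with (M * (Nx * N)) by ring. apply HM; auto using in_l1_cv, cv_norm.
Qed.

Definition point_defect_le (f : S -> Cx) (D : R) : Prop :=
  forall s t, Cmod (Csub (f (op s t)) (Cmul (f s) (f t))) <= D * w s * w t.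

(** The defect of [Theta_th] is controlled by the pointwise defect of [th]:
    apply density in the left factor while the right one is a point mass,
    then in the right factor. *)
Lemma Theta_defect_bound th D : 0 <= D -> point_defect_le (fun s => bC (th s)) D ->
  forall x y Nx Ny, in_l1 w x -> in_l1 w y -> l1_norm_le w x Nx -> l1_norm_le w y Ny ->
  Cmod (Csub (Theta th (cv x y)) (Cmul (Theta th x) (Theta th y))) <= D * Nx * Ny.
Proof.
  intros hD hth.
  assert (Hpoint : forall t x Nx, in_l1 w x -> l1_norm_le w x Nx ->
    Cmod (Csub (Theta th (cv x (delta t))) (Cmul (Theta th (delta t)) (Theta th x)))
    <= (D * w t) * Nx).
  { intros t. apply dual_bound_from_points.
    - apply in_dual_sub; [apply in_dual_cv_r | apply in_dual_cmul];
        auto using Theta_dual, in_l1_delta.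
    - pose proof (Hw t). nra.
    - intros s. rewrite cv_delta, !Theta_delta. specialize (hth s t).
      replace (Cmul (bC (th t)) (bC (th s))) with (Cmul (bC (th s)) (bC (th t))) by cx_ring.
      lra. }
  intros x y Nx Ny hx hy bx by_.
  apply (dual_bound_from_points (fun y => Csub (Theta th (cv x y)) (Cmul (Theta th x) (Theta th y))));
    auto.
  - apply in_dual_sub; [apply in_dual_cv_l | apply in_dual_cmul]; auto using Theta_dual.
  - pose proof (l1_norm_nonneg _ _ bx). nra.
  - intros t. specialize (Hpoint t x Nx hx bx).
    replace (Cmul (Theta th x) (Theta th (delta t))) with (Cmul (Theta th (delta t)) (Theta th x))
      by cx_ring.
    lra.
Qed.

Lemma Theta_defect_le th D : 0 <= D -> point_defect_le (fun s => bC (th s)) D ->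
  defect_le op w (Theta th) D.
Proof.
  intros hD hth x y z hx hy bx by_ hz. rewrite (conv_cv x y z hx hy hz).
  pose proof (Theta_defect_bound th D hD hth x y 1 1 hx hy bx by_). lra.
Qed.

Lemma Theta_is_mult th : point_defect_le (fun s => bC (th s)) 0 -> is_mult op w (Theta th).
Proof.
  intros hth. split; [apply Theta_dual|]. intros x y z hx hy hz.
  rewrite (conv_cv x y z hx hy hz). pose proof hx as [Nx bx]. pose proof hy as [Ny by_].
  apply Cx_eq_of_dist_le0. replace 0 with (0 * Nx * Ny) by ring.
  apply Theta_defect_bound; auto; lra.
Qed.

(** A linear functional with defect [d] has point values of defect [d]:
    test it on the unit vectors [delta_s / w(s)]. *)
Lemma dual_point_defect psi d : is_linear_functional w psi -> defect_le op w psi d ->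
  point_defect_le (fun s => psi (delta s)) d.
Proof.
  intros [Hadd Hsc] Hdef s t. pose proof (Hw s) as ws. pose proof (Hw t) as wt.
  set (c1 := (/ w s, 0) : Cx). set (c2 := (/ w t, 0) : Cx).
  assert (m1 : Cmod c1 = / w s).
  { unfold c1. rewrite Cmod_real. apply Rabs_right, Rle_ge, Rlt_le, Rinv_0_lt_compat; auto. }
  assert (m2 : Cmod c2 = / w t).
  { unfold c2. rewrite Cmod_real. apply Rabs_right, Rle_ge, Rlt_le, Rinv_0_lt_compat; auto. }
  assert (b1 : l1_norm_le w (fscale c1 (delta s)) 1).
  { pose proof (l1_scaled_delta c1 s) as h. rewrite m1, Rinv_l in h; [exact h | lra]. }
  assert (b2 : l1_norm_le w (fscale c2 (delta t)) 1).
  { pose proof (l1_scaled_delta c2 t) as h. rewrite m2, Rinv_l in h; [exact h | lra]. }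
  pose proof (Hdef _ _ _ (in_l1_scaled_delta c1 s) (in_l1_scaled_delta c2 t) b1 b2
    (cv_conv _ _ (in_l1_scaled_delta c1 s) (in_l1_scaled_delta c2 t))) as hD.
  rewrite cv_scale_l, cv_scale_r, cv_delta, !Hsc in hD
    by auto using in_l1_delta, in_l1_scale, in_l1_cv.
  replace (Csub (Cmul c1 (Cmul c2 (psi (delta (op s t)))))
                (Cmul (Cmul c1 (psi (delta s))) (Cmul c2 (psi (delta t)))))
    with (Cmul (Cmul c1 c2) (Csub (psi (delta (op s t))) (Cmul (psi (delta s)) (psi (delta t)))))
    in hD by cx_ring.
  rewrite !Cmod_mul, m1, m2 in hD.
  apply (Rmult_le_compat_l (w s * w t)) in hD; [|nra].
  replace (w s * w t * (/ w s * / w t * Cmod (Csub (psi (delta (op s t)))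
             (Cmul (psi (delta s)) (psi (delta t))))))
    with (Cmod (Csub (psi (delta (op s t))) (Cmul (psi (delta s)) (psi (delta t))))) in hD
    by (field; lra).
  lra.
Qed.

Definition indicator (F : S -> Prop) (s : S) : bool :=
  if excluded_middle_informative (F s) then true else false.

Lemma ratio_defect_iff (phi : S -> bool) d e f :
  Rabs (b2R (phi (op e f)) - b2R (phi e) * b2R (phi f)) / (w e * w f) <= d <->
  Cmod (Csub (bC (phi (op e f))) (Cmul (bC (phi e)) (bC (phi f)))) <= d * w e * w f.
Proof.
  rewrite bC_defect, Cmod_real, div_le_iff, Rmult_assoc; [tauto|].
  apply Rmult_lt_0_compat; apply Hw.
Qed.

Lemma indicator_close_iff (F : S -> Prop) (phi : S -> bool) eps e :
  ((F e -> Rabs (1 - b2R (phi e)) / w e <= eps) /\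
   (~ F e -> Rabs (0 - b2R (phi e)) / w e <= eps)) <->
  Cmod (Csub (bC (indicator F e)) (bC (phi e))) <= eps * w e.
Proof.
  rewrite bC_sub, Cmod_real. unfold indicator.
  destruct (excluded_middle_informative (F e)) as [h|h]; simpl b2R;
    rewrite <- (div_le_iff _ _ _ (Hw e)); tauto.
Qed.

(** Rounding preserves almost multiplicativity: the rounded defect is [0] or
    [1], and it cannot be [1] where [d w(e) w(g) < 1] because it is then
    within [1/2] of the small defect of [f] (see [defect_perturbation]). *)
Lemma round01_defect (f : S -> Cx) k d : 0 <= k -> k <= d / 10 ->
  point_defect_le f (k * k) ->
  (forall s, Cmod (Csub (f s) (bC (round01 (f s)))) <= k * w s) ->
  point_defect_le (fun s => bC (round01 (f s))) d.
Proof.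
  intros hk hkd Hf Hr e g. pose proof (Hw1 e) as we. pose proof (Hw1 g) as wg.
  assert (hd : 0 <= d) by lra.
  pose proof (defect_perturbation _ _ _ _ _ _ _ _ _ _ (Hr (op e g)) (Hr e) (Hr g) (Hf e g)) as Hp.
  rewrite bC_defect, Cmod_real in *.
  destruct (b2R_defect_cases (round01 (f (op e g))) (round01 (f e)) (round01 (f g))) as [h0|h1].
  { rewrite h0. repeat apply Rmult_le_pos; lra. }
  rewrite h1 in *. destruct (Rle_or_lt 1 (d * w e * w g)) as [hl|hl]; [lra|exfalso].
  pose proof (Hsub e g).
  assert (k * (w e * w g) <= d / 10 * (w e * w g)) by (apply Rmult_le_compat_r; nra).
  assert (X : k * w e * w g < 1 / 10) by lra.
  assert (k * w e < 1 / 10) by nra. assert (k * w g < 1 / 10) by nra.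
  assert (k * w (op e g) < 1 / 10) by nra.
  assert (k * k * w e * w g < 1 / 100) by nra.
  assert (k * w e * (1 + k * w g) < 1 / 10 + 1 / 100) by nra.
  lra.
Qed.

Section Semilattice.
Hypothesis HS : is_semilattice op.

Lemma sl_le_mul_l s t : sl_le op (op s t) s.
Proof. destruct HS as [ha [hc hi]]. unfold sl_le. rewrite hc, ha, hi. reflexivity. Qed.
Lemma sl_le_mul_r s t : sl_le op (op s t) t.
Proof. destruct HS as [ha [hc hi]]. unfold sl_le. rewrite <- ha, hi. reflexivity. Qed.

(** Near the point values of an almost multiplicative function, rounding to
    [{0,1}] costs at most [k w(s)] (idempotence of the elements of [S]). *)
Lemma round01_points (f : S -> Cx) k : 0 <= k ->
  point_defect_le f (k * k) -> forall s, Cmod (Csub (f s) (bC (round01 (f s)))) <= k * w s.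
Proof.
  destruct HS as [_ [_ Hidem]]. intros hk Hf s. apply round01_close, near_idempotent.
  - pose proof (Hw s). nra.
  - specialize (Hf s s). rewrite Hidem in Hf. lra.
Qed.

Lemma indicator_mult F : (forall x, ~ F x) \/ is_filter op F ->
  point_defect_le (fun s => bC (indicator F s)) 0.
Proof.
  intros HF s t.
  enough (E : bC (indicator F (op s t)) = Cmul (bC (indicator F s)) (bC (indicator F t))).
  { rewrite E. replace (Csub _ _) with C0 by cx_ring. rewrite Cmod_C0. lra. }
  unfold indicator.
  destruct (excluded_middle_informative (F s)) as [fs|fs];
  destruct (excluded_middle_informative (F t)) as [ft|ft];
  destruct (excluded_middle_informative (F (op s t))) as [fst|fst]; unfold bC, b2R; try cx_ring;
  exfalso; destruct HF as [HF|[_ [Hclosed Hup]]];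
  first [ exact (HF _ fst) | exact (HF _ fs) | exact (fst (Hclosed _ _ fs ft))
        | exact (fs (Hup _ _ fst (sl_le_mul_l s t))) | exact (ft (Hup _ _ fst (sl_le_mul_r s t))) ].
Qed.

Lemma support_filter (f : S -> Cx) : (forall s t, f (op s t) = Cmul (f s) (f t)) ->
  (forall s, f s = C0 \/ f s = C1) -> (forall x, ~ f x = C1) \/ is_filter op (fun s => f s = C1).
Proof.
  intros Hmul H01. destruct (classic (exists x, f x = C1)) as [hx|hx]; [right|left].
  - split; [exact hx|]. split.
    + intros x y h1 h2. rewrite Hmul, h1, h2. unfold C1; cx_ring.
    + intros x y hy hle. unfold sl_le in hle. pose proof (Hmul y x) as h. rewrite hle, hy in h.
      destruct (H01 x) as [h0|h1]; auto. rewrite h0 in h. unfold C1, C0 in h.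
      injection h; intros. lra.
  - intros x hx'. apply hx. exists x; auto.
Qed.

Lemma character_points chi : is_mult op w chi ->
  (forall s t, chi (delta (op s t)) = Cmul (chi (delta s)) (chi (delta t))) /\
  (forall s, chi (delta s) = C0 \/ chi (delta s) = C1).
Proof.
  intros [_ Hmul].
  assert (Hpt : forall s t, chi (delta (op s t)) = Cmul (chi (delta s)) (chi (delta t))).
  { intros s t. rewrite <- cv_delta. apply Hmul; auto using in_l1_delta, cv_conv. }
  split; auto. intros s. apply idempotent_C. rewrite <- Hpt. destruct HS as [_ [_ hid]].
  rewrite hid. reflexivity.
Qed.

Lemma indicator_01 (f : S -> Cx) : (forall s, f s = C0 \/ f s = C1) ->
  forall s, bC (indicator (fun u => f u = C1) s) = f s.
Proof.
  intros H01 s. unfold indicator. destruct (excluded_middle_informative (f s = C1)) as [h|h].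
  - rewrite h. reflexivity.
  - destruct (H01 s) as [h0|h1]; [rewrite h0; reflexivity | contradiction].
Qed.

(** (i) => (ii): [Theta_phi] is almost multiplicative, hence close to a
    character [chi]; the support of [chi] is the required filter. *)
Lemma amnm_cond_ii : AMNM_l1 op w -> cond_ii op w.
Proof.
  intros Hamnm eps he. destruct (Hamnm (eps / 2) ltac:(lra)) as [d [hd Hd]].
  exists d. split; auto. intros phi hphi.
  assert (Hdef : defect_le op w (Theta phi) d).
  { apply Theta_defect_le; [lra|]. intros s t. apply ratio_defect_iff, hphi. }
  destruct (Hd (Theta phi) (Theta_dual phi) Hdef (eps / 2) ltac:(lra)) as [chi [Hchi Hdist]].
  destruct (character_points chi Hchi) as [Hmul H01].
  exists (fun s => chi (delta s) = C1). split; [apply support_filter; auto|].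
  intros e. apply (proj2 (indicator_close_iff (fun s => chi (delta s) = C1) phi eps e)).
  rewrite (indicator_01 (fun s => chi (delta s)) H01), Cmod_sub_sym.
  pose proof (Hdist (delta e) (w e) (in_l1_delta e) (l1_delta e)) as h.
  rewrite Theta_delta in h. lra.
Qed.

(** (ii) => (i): the point values of an almost multiplicative [psi] round to
    an almost multiplicative [phi : S -> bool]; (ii) yields a filter [F]
    whose character [Theta_(chi_F)] is close to [psi] at every point mass,
    hence in norm by density. *)
Lemma cond_ii_amnm : cond_ii op w -> AMNM_l1 op w.
Proof.
  intros Hii eps he. destruct (Hii (eps / 2) ltac:(lra)) as [d [hd Hd]].
  set (k := Rmin (d / 10) (eps / 2)).
  assert (hk : 0 < k) by (apply Rmin_pos; lra).
  assert (hkd : k <= d / 10) by apply Rmin_l.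
  assert (hke : k <= eps / 2) by apply Rmin_r.
  exists (k * k). split; [nra|]. intros psi Hpsi Hdef eta heta.
  set (f := fun s => psi (delta s)).
  assert (Hf : point_defect_le f (k * k)) by (apply dual_point_defect; [apply Hpsi | auto]).
  assert (Hround := round01_points f k (Rlt_le _ _ hk) Hf).
  set (phi := fun s => round01 (f s)).
  assert (Hphi : point_defect_le (fun s => bC (phi s)) d)
    by (apply (round01_defect f k); auto; lra).
  destruct (Hd phi (fun e g => proj2 (ratio_defect_iff phi d e g) (Hphi e g))) as [F [HF Hclose]].
  exists (Theta (indicator F)). split; [apply Theta_is_mult, indicator_mult; auto|].
  intros a N ha hN. pose proof (l1_norm_nonneg _ _ hN).
  enough (Cmod (Csub (psi a) (Theta (indicator F) a)) <= eps * N) by nra.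
  apply (dual_bound_from_points (fun a => Csub (psi a) (Theta (indicator F) a)));
    auto using in_dual_sub, Theta_dual; [lra|].
  intros s. rewrite Theta_delta. fold (f s). pose proof (Hw s).
  eapply Rle_trans; [apply (Cmod_tri _ (bC (phi s)))|].
  pose proof (Hround s). pose proof (proj1 (indicator_close_iff F phi (eps / 2) s) (Hclose s)).
  rewrite (Cmod_sub_sym (bC (phi s))). fold (phi s) in *. nra.
Qed.

End Semilattice.
End Theta.
End Weighted.

(** On a semilattice a submultiplicative weight is at least [1]:
    [w(s) = w(s s) <= w(s)^2]. *)
Lemma semilattice_weight_ge1 (S : Type) (op : S -> S -> S) (w : S -> R) :
  is_semilattice op -> is_weight w -> submultiplicative op w -> forall s, 1 <= w s.
Proof.
  intros [_ [_ Hidem]] Hw Hsub s. pose proof (Hsub s s) as h. rewrite Hidem in h.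
  pose proof (Hw s). nra.
Qed.

Theorem corollaryc (S : Type) (op : S -> S -> S) (w : S -> R)
  (HS : is_semilattice op) (Hw : is_weight w) (Hsub : submultiplicative op w) :
  AMNM_l1 op w <-> cond_ii op w.
Proof.
  pose proof (semilattice_weight_ge1 S op w HS Hw Hsub) as Hw1.
  split; [apply amnm_cond_ii | apply cond_ii_amnm]; auto.
Qed.
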